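(* Let $\mathfrak g$ be a Lie algebra with basis and structure constants $\chi^\gamma_{\alpha\beta}$, and for $n\ge3$ let $A^{(1)},\dots,A^{(n-2)},B:=A^{(n-1)},C:=A^{(n)}$ be $\mathfrak g$-valued functions depending on a small parameter $\varepsilon$ and satisfying the Lie–Poisson brackets $\{A^{(i)}_\alpha,A^{(j)}_\beta\}=-\delta_{ij}\sum_\gamma\chi^\gamma_{\alpha\beta}A^{(i)}_\gamma$. Assume they admit Laurent expansions in $\varepsilon$ with $\varepsilon$-independent coefficients, $$A^{(i)}=\tilde A^{(i)}+O(\varepsilon)\ (i\le n-2),\qquad C=\tfrac1\varepsilon A^{(n-1)}_1+C_0+O(\varepsilon),\qquad B=-\tfrac1\varepsilon A^{(n-1)}_1+B_0+O(\varepsilon),$$ and that the Poisson brackets can be expanded termwise in $\varepsilon$. Put $A^{(n-1)}_0=B_0+C_0$. Then for $i,j=1,\dots,n-2$: $$\{\tilde A^{(i)}_\alpha,\tilde A^{(j)}_\beta\}=-\delta_{ij}\sum_\gamma\chi^\gamma_{\alpha\beta}\tilde A^{(i)}_\gamma,\qquad \{\tilde A^{(i)}_\alpha,A^{(n-1)}_{0,\beta}\}=\{\tilde A^{(i)}_\alpha,A^{(n-1)}_{1,\beta}\}=0,$$ $$\{A^{(n-1)}_{1,\alpha},A^{(n-1)}_{1,\beta}\}=0,\quad \{A^{(n-1)}_{1,\alpha},A^{(n-1)}_{0,\beta}\}=-\sum_\gamma\chi^\gamma_{\alpha\beta}A^{(n-1)}_{1,\gamma},\quad \{A^{(n-1)}_{0,\alpha},A^{(n-1)}_{0,\beta}\}=-\sum_\gamma\chi^\gamma_{\alpha\beta}A^{(n-1)}_{0,\gamma}.$$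 That is, the limit $\varepsilon\to0$ (1+1 confluence $u_n=u_{n-1}+\varepsilon t_1$) gives a Poisson morphism from the product of $n$ coadjoint orbits of $\mathfrak g$ to the product of $n-2$ coadjoint orbits of $\mathfrak g$ and one coadjoint orbit of the Takiff algebra $\mathfrak g[z]/z^2\mathfrak g[z]$.
   Context: Lower indices $\alpha,\beta,\gamma$ denote components in the chosen basis of $\mathfrak g$; e.g. $A^{(n-1)}_{1,\alpha}$ is the $\alpha$-component of $A^{(n-1)}_1$. In the confluence the connection $\sum_i\frac{A^{(i)}}{\lambda-u_i}$ with $u_n=u_{n-1}+\varepsilon t_1$ tends to $\sum_{i\le n-2}\frac{\tilde A^{(i)}}{\lambda-u_i}+\frac{t_1A^{(n-1)}_1}{(\lambda-u_{n-1})^2}+\frac{A^{(n-1)}_0}{\lambda-u_{n-1}}$. *)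

From HB Require Import structures.
From mathcomp Require Import all_boot all_order all_algebra.
Set Implicit Arguments. Unset Strict Implicit. Unset Printing Implicit Defensive.
Import Order.TTheory GRing.Theory Num.Theory.
Local Open Scope ring_scope.

(* A Poisson bracket on a commutative K-algebra P (the algebra of functions on
   phase space): bilinear (right-linearity follows from antisymmetry),
   antisymmetric, Jacobi, Leibniz. *)
Definition poisson_bracket (K : fieldType) (P : comAlgType K)
    (br : P -> P -> P) : Prop :=
  [/\ forall (c : K) (a b e : P), br (c *: a + b) e = c *: br a e + br b e,
      forall a b : P, br a b = - br b a,
      forall a b e : P, br a (br b e) + br b (br e a) + br e (br a b) = 0
    & forall a b e : P, br a (b * e) = br a b * e + b * br a e].

(* Structure constants chi g a b = chi^g_{ab} of a Lie algebra of dimension d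
   with respect to a basis: [x_a, x_b] = sum_g chi^g_{ab} x_g. *)
Definition lie_structure_constants (K : fieldType) (d : nat)
    (chi : 'I_d -> 'I_d -> 'I_d -> K) : Prop :=
  (forall g a b, chi g a b = - chi g b a) /\
  (forall a b c e,
     \sum_(h < d) (chi h a b * chi e h c + chi h b c * chi e h a
                   + chi h c a * chi e h b) = 0).

(* A formal Laurent series in eps with coefficients in P is represented by its
   coefficient function  f : int -> P,  f k = coefficient of eps^k.
   If a and b both vanish below eps^m, the termwise expansion of the bracket
   {sum_p a_p eps^p, sum_q b_q eps^q} = sum_k (sum_(p+q=k) {a_p,b_q}) eps^k
   has k-th coefficient  laurent_br m br a b k  (a finite sum over
   p = m, ..., k - m; it is 0 when k < 2m). *)
Definition laurent_br (K : fieldType) (P : comAlgType K) (br : P -> P -> P)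
    (m : int) (a b : int -> P) (k : int) : P :=
  \sum_(i < (absz (k - 2 * m)%R).+1 | (2 * m <= k)%R)
     br (a (m + i%:Z)) (b (k - m - i%:Z)).

(* Near the confluence, B + C = (B_0 + C_0) + O(eps) has no pole, and by
   bilinearity it satisfies the Lie-Poisson relations because B and C do and
   they Poisson-commute.  Comparing the coefficients of eps^-2, eps^-1 and eps^0
   in the termwise expansion of the brackets among A^(i), C and B + C then gives
   each relation: only the leading terms of the series survive, since every
   series other than B and C is regular at eps = 0. *)

From HB Require Import structures.
From mathcomp Require Import all_boot all_order all_algebra.
From mathcomp Require Import zify.
Set Implicit Arguments. Unset Strict Implicit. Unset Printing Implicit Defensive.
Import Order.TTheory GRing.Theory Num.Theory.
Local Open Scope ring_scope.

Section PoissonBracket.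
Variables (K : fieldType) (P : comAlgType K) (br : P -> P -> P).
Hypothesis brP : poisson_bracket br.

Lemma brDl x y z : br (x + y) z = br x z + br y z.
Proof. by case: brP => brZDl _ _ _; have := brZDl 1 x y z; rewrite !scale1r. Qed.

Lemma brDr x y z : br z (x + y) = br z x + br z y.
Proof. by case: brP => _ brC _ _; rewrite brC brDl opprD -!brC. Qed.

Lemma br0l x : br 0 x = 0.
Proof. by apply: (@addrI _ (br 0 x)); rewrite -brDl !addr0. Qed.

Lemma br0r x : br x 0 = 0.
Proof. by case: brP => _ brC _ _; rewrite brC br0l oppr0. Qed.

Lemma laurent_brDl m (a b c : int -> P) k :
  laurent_br br m (a \+ b) c k = laurent_br br m a c k + laurent_br br m b c k.
Proof. by rewrite -big_split; apply: eq_bigr => i _; rewrite brDl. Qed.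

Lemma laurent_brDr m (a b c : int -> P) k :
  laurent_br br m c (a \+ b) k = laurent_br br m c a k + laurent_br br m c b k.
Proof. by rewrite -big_split; apply: eq_bigr => i _; rewrite brDr. Qed.

Lemma laurent_br_lie_poissonD d (chi : 'I_d -> 'I_d -> 'I_d -> K) m k
    (X Y : 'I_d -> int -> P) :
  (forall a b, laurent_br br m (X a) (X b) k = - \sum_(g < d) chi g a b *: X g k) ->
  (forall a b, laurent_br br m (Y a) (Y b) k = - \sum_(g < d) chi g a b *: Y g k) ->
  (forall a b, laurent_br br m (X a) (Y b) k = 0) ->
  (forall a b, laurent_br br m (Y a) (X b) k = 0) ->
  forall a b, laurent_br br m (X a \+ Y a) (X b \+ Y b) k =
              - \sum_(g < d) chi g a b *: (X g \+ Y g) k.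
Proof.
move=> XX YY XY YX a b.
rewrite laurent_brDl !laurent_brDr XX YY XY YX addr0 add0r -opprD -big_split.
by congr (- _); apply: eq_bigr => g _; rewrite scalerDr.
Qed.

End PoissonBracket.

Section LaurentCoefficients.
Variables (K : fieldType) (P : comAlgType K) (br : P -> P -> P).
Implicit Types a b : int -> P.

Lemma laurent_br_coefN2 a b : laurent_br br (-1) a b (-2) = br (a (-1)) (b (-1)).
Proof. by rewrite /laurent_br big_mkcond /= big_ord_recr big_ord0 /= add0r. Qed.

Lemma laurent_br_coefN1 a b :
  laurent_br br (-1) a b (-1) = br (a (-1)) (b 0) + br (a 0) (b (-1)).
Proof. by rewrite /laurent_br big_mkcond /= !big_ord_recr big_ord0 /= add0r. Qed.

Lemma laurent_br_coef0 a b :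
  laurent_br br (-1) a b 0 =
  br (a (-1)) (b 1) + br (a 0) (b 0) + br (a 1) (b (-1)).
Proof. by rewrite /laurent_br big_mkcond /= !big_ord_recr big_ord0 /= add0r. Qed.

End LaurentCoefficients.

Theorem proposition4p3 (K : fieldType) (P : comAlgType K) (br : P -> P -> P)
  (d : nat) (chi : 'I_d -> 'I_d -> 'I_d -> K) (n : nat)
  (A : 'I_n -> 'I_d -> int -> P) (iB iC : 'I_n)
  (At : 'I_n -> 'I_d -> P) (A1 B0 C0 : 'I_d -> P) :
  poisson_bracket br ->
  lie_structure_constants chi ->
  (3 <= n)%N ->
  val iB = (n - 2)%N -> val iC = (n - 1)%N ->
  (* all expansions start at eps^(-1) at worst *)
  (forall i a k, k < -1 -> A i a k = 0) ->
  (* A^(i) = tilde A^(i) + O(eps) for i <= n-2 *)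
  (forall i a, (val i < n - 2)%N -> A i a (-1) = 0 /\ A i a 0 = At i a) ->
  (* C = A1/eps + C0 + O(eps),  B = -A1/eps + B0 + O(eps) *)
  (forall a, A iC a (-1) = A1 a /\ A iC a 0 = C0 a) ->
  (forall a, A iB a (-1) = - A1 a /\ A iB a 0 = B0 a) ->
  (* Lie-Poisson brackets, expanded termwise in eps *)
  (forall i j a b k,
     laurent_br br (-1) (A i a) (A j b) k =
     if i == j then - \sum_(g < d) chi g a b *: A i g k else 0) ->
  let A0 := fun a => B0 a + C0 a in
  [/\ forall (i j : 'I_n) a b, (val i < n - 2)%N -> (val j < n - 2)%N ->
        br (At i a) (At j b) =
        if i == j then - \sum_(g < d) chi g a b *: At i g else 0,
      forall (i : 'I_n) a b, (val i < n - 2)%N -> br (At i a) (A0 b) = 0,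
      forall (i : 'I_n) a b, (val i < n - 2)%N -> br (At i a) (A1 b) = 0
    & [/\ forall a b, br (A1 a) (A1 b) = 0,
      forall a b, br (A1 a) (A0 b) = - \sum_(g < d) chi g a b *: A1 g
    & forall a b, br (A0 a) (A0 b) = - \sum_(g < d) chi g a b *: A0 g]].
Proof.
move=> brP _ n_ge3 iBE iCE A_low A_reg A_C A_B A_LP A0.
have A_N1 i a (lt_i : (val i < n - 2)%N) : A i a (-1) = 0 := (A_reg i a lt_i).1.
have A_0 i a (lt_i : (val i < n - 2)%N) : A i a 0 = At i a := (A_reg i a lt_i).2.
have iCB : iC != iB by apply/eqP => /(congr1 val); rewrite iBE iCE; lia.
have [neqB neqC] : (forall i, (val i < n - 2)%N -> i != iB) /\
                   (forall i, (val i < n - 2)%N -> i != iC).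
  by split=> i lt_i; apply/eqP => eq_i; move: lt_i; rewrite eq_i ?iBE ?iCE; lia.
have A_offdiag i j a b k : i != j -> laurent_br br (-1) (A i a) (A j b) k = 0.
  by rewrite A_LP => /negPf ->.
pose S b := A iB b \+ A iC b.
have S_N1 b : S b (-1) = 0 by rewrite /S /= (A_B b).1 (A_C b).1 addNr.
have S_0 b : S b 0 = A0 b by rewrite /S /= (A_B b).2 (A_C b).2.
have S_LP a b k : laurent_br br (-1) (S a) (S b) k = - \sum_(g < d) chi g a b *: S g k.
  apply: (laurent_br_lie_poissonD brP (X := A iB) (Y := A iC)) => // a' b';
    by rewrite A_LP ?eqxx // ifN // eq_sym.
split; [move=> i j a b lt_i lt_j | move=> i a b lt_i | move=> i a b lt_i | split=> a b].
- have := A_LP i j a b 0.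
  rewrite laurent_br_coef0 A_N1 // A_N1 // br0l // br0r // add0r addr0 !A_0 // => ->.
  by case: eqP => // _; congr (- _); apply: eq_bigr => g _; rewrite A_0.
- have := laurent_brDr brP (-1) (A iB b) (A iC b) (A i a) 0.
  rewrite !A_offdiag ?neqB ?neqC // addr0 laurent_br_coef0 -/(S b) S_N1 S_0.
  by rewrite A_N1 // A_0 // br0l // br0r // add0r addr0.
- have := A_offdiag i iC a b (-1) (neqC i lt_i).
  by rewrite laurent_br_coefN1 A_N1 // br0l // add0r A_0 // (A_C b).1.
- have := A_LP iC iC a b (-2); rewrite laurent_br_coefN2 !(A_C _).1 eqxx => ->.
  by rewrite big1 ?oppr0 // => g _; rewrite A_low ?scaler0.
- have := laurent_brDr brP (-1) (A iB b) (A iC b) (A iC a) (-1).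
  rewrite A_offdiag // A_LP eqxx add0r laurent_br_coefN1 -/(S b) S_N1 S_0 br0r // addr0.
  by rewrite (A_C a).1 => ->; congr (- _); apply: eq_bigr => g _; rewrite (A_C g).1.
- have := S_LP a b 0; rewrite laurent_br_coef0 !S_N1 br0l // br0r // add0r addr0 !S_0 => ->.
  by congr (- _); apply: eq_bigr => g _; rewrite S_0.
Qed.
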